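(* Let $(a_i)_{i\ge0}$ be a sequence in $[0,\infty]$ and $(s_i)_{i\ge0}$ a sequence in $[0,\infty)$. Put $y_i=1+\sum_{j\le i}a_j$, $t_i=\sum_{j<i}s_j$ (for $i\in\mathbb{N}\cup\{\infty\}$) and $I=\inf\{i:y_i=\infty\}$ (with $\inf\emptyset=\infty$). Suppose there is $c>0$ such that for every $i$, $a_{i+1}\ge c\,y_i^2s_i/2$ and $s_i\le1/y_i$. Then $t_I\le2+4/c$.
   Context: Elementary deterministic statement about real sequences; conventions $1/\infty=0$ and $\inf\emptyset=\infty$. *)

From HB Require Import structures.
From mathcomp Require Import all_boot all_order all_algebra.
From mathcomp Require Import all_classical all_reals all_analysis.
Set Implicit Arguments. Unset Strict Implicit. Unset Printing Implicit Defensive.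
Import Order.TTheory GRing.Theory Num.Theory.
Local Open Scope ring_scope.
Local Open Scope ereal_scope.

Definition yseq (R : realType) (a : nat -> \bar R) (i : nat) : \bar R :=
  1 + \sum_(0 <= j < i.+1) a j.

(* I = inf {i : y_i = +oo}, with inf of the empty set = oo (encoded as None) *)
Definition Iinf (R : realType) (a : nat -> \bar R) : option nat :=
  match pselect (exists i, yseq a i == +oo) with
  | left H => Some (ex_minn H)
  | right _ => None
  end.

Definition tseq (R : realType) (s : nat -> R) (I : option nat) : \bar R :=
  match I with
  | Some n => (\sum_(0 <= j < n) s j)%:E
  | None => \sum_(0 <= j <oo) (s j)%:E
  end.

From HB Require Import structures.
From mathcomp Require Import all_boot all_order all_algebra.
From mathcomp Require Import all_classical all_reals all_analysis.
From mathcomp Require Import ring lra.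
Import Order.TTheory GRing.Theory Num.Theory.
Local Open Scope ring_scope.

(* Proof idea: a telescoping potential.  Put K = 2 + 4/c.  As long as y_i is
   finite, the two hypotheses give the one-step estimate
       s_i <= K / y_i - K / y_(i+1),
   so by telescoping  t_n <= K - K / y_n  whenever y_n is finite.  Adding one
   more step with s_n <= 1 / y_n <= K / y_n yields  t_(n+1) <= K  whenever y_n
   is finite.  If I is finite then either I = 0 (and t_0 = 0) or I = m+1 with
   y_m finite; if I is infinite, every y_n is finite, so all partial sums of
   the series t_oo are bounded by K and so is its limit. *)

Lemma telescoping_step {R : realFieldType} {Y A s k : R} :
  1 <= Y -> 0 <= A -> 0 <= s -> 0 <= k ->
  2 * Y ^+ 2 * s <= k * A -> s * Y <= 1 ->
  s <= (2 + k) / Y - (2 + k) / (Y + A).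
Proof.
move=> Y1 A0 s0 k0 growth sY.
have Y0 : 0 < Y by lra.
have YA0 : 0 < Y + A by lra.
have -> : (2 + k) / Y - (2 + k) / (Y + A) = (2 + k) * A / (Y * (Y + A)).
  by field; rewrite ?lt0r_neq0.
rewrite ler_pdivlMr ?mulr_gt0 //.
(* s Y (Y + A) = s Y^2 + (s Y) A <= k A + 2 A *)
have sYA : s * Y * A <= A by rewrite -[leRHS]mul1r ler_wpM2r.
nra.
Qed.

Lemma growth_rescaled {R : realFieldType} {Y A s c : R} : 0 < c ->
  c / 2 * Y ^+ 2 * s <= A -> 2 * Y ^+ 2 * s <= 4 / c * A.
Proof.
move=> c0 growth.
have -> : 2 * Y ^+ 2 * s = 4 / c * (c / 2 * Y ^+ 2 * s).
  by field; rewrite lt0r_neq0.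
by rewrite ler_wpM2l // divr_ge0 // ltW.
Qed.

Local Open Scope ereal_scope.

Section YSequence.
Variables (R : realType) (a : nat -> \bar R).
Hypothesis a_ge0 : forall i, 0 <= a i.

Lemma yseqS n : yseq a n.+1 = yseq a n + a n.+1.
Proof. by rewrite /yseq big_nat_recr //= addeA. Qed.

Lemma yseq_ge1 n : 1 <= yseq a n.
Proof. by rewrite /yseq leeDl // sume_ge0. Qed.

Lemma yseqS_fin n Y' : yseq a n.+1 = Y'%:E ->
  exists Y A, [/\ yseq a n = Y%:E, a n.+1 = A%:E & Y' = (Y + A)%R].
Proof.
rewrite yseqS; have := yseq_ge1 n; have := a_ge0 n.+1.
case: (a n.+1) => [A||] //; case: (yseq a n) => [Y||] //= _ _ [<-].
by exists Y, A.
Qed.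

End YSequence.

Section Telescoping.
Variables (R : realType) (a : nat -> \bar R) (s : nat -> R) (c : R).
Hypotheses (a_ge0 : forall i, 0 <= a i) (s_ge0 : forall i, (0 <= s i)%R).
Hypothesis c_gt0 : (0 < c)%R.
Hypothesis growth : forall i, (c / 2)%:E * (yseq a i ^+ 2) * (s i)%:E <= a i.+1.
Hypothesis step_le : forall i, (s i)%:E <= (yseq a i)^-1.

Let K : R := 2 + 4 / c.

Let K_ge2 : (2 <= K)%R.
Proof. by rewrite /K lerDl divr_ge0 // ltW. Qed.

Let step_fin {n Y} : yseq a n = Y%:E -> (s n * Y <= 1)%R.
Proof.
move=> EY; have Y1 : (1 <= Y)%R by rewrite -lee_fin -EY yseq_ge1.
have := step_le n; rewrite EY inver gt_eqF ?(lt_le_trans ltr01) // lee_fin.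
by move/(ler_wpM2r (le_trans ler01 Y1)); rewrite mulVf // gt_eqF ?(lt_le_trans ltr01).
Qed.

Lemma partial_sum_potential {n Y} : yseq a n = Y%:E ->
  (\sum_(0 <= j < n) s j <= K - K / Y)%R.
Proof.
elim: n Y => [|n IH] Y' EY'.
  have Y1 : (1 <= Y')%R by rewrite -lee_fin -EY' yseq_ge1.
  rewrite big_geq // subr_ge0 ler_pdivrMr ?(lt_le_trans ltr01) //.
  by rewrite -[leLHS]mulr1 ler_wpM2l //; have := K_ge2; lra.
have [Y [A [EY EA ->]]] := yseqS_fin _ _ a_ge0 _ _ EY'.
have Y1 : (1 <= Y)%R by rewrite -lee_fin -EY yseq_ge1.
have A0 : (0 <= A)%R by rewrite -lee_fin -EA.
have growthY := growth n; rewrite EY EA -EFin_expe -!EFinM lee_fin in growthY.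
have := telescoping_step Y1 A0 (s_ge0 n) (divr_ge0 (ler0n _ 4) (ltW c_gt0))
  (growth_rescaled c_gt0 growthY) (step_fin EY).
have := IH Y EY; rewrite big_nat_recr //= -/K; lra.
Qed.

(* Adding the step s_n <= 1 / y_n <= K / y_n: t_(n+1) <= K if y_n is finite. *)
Lemma partial_sum_bounded n : yseq a n != +oo ->
  (\sum_(0 <= j < n.+1) s j <= K)%R.
Proof.
have := yseq_ge1 _ _ a_ge0 n; case EY: (yseq a n) => [Y||] //; rewrite lee_fin => Y1 _.
have Y0 : (0 < Y)%R by lra.
have Kdiv : (s n <= K / Y)%R.
  rewrite ler_pdivlMr //; have := step_fin EY; have := K_ge2; lra.
have := partial_sum_potential EY; rewrite big_nat_recr //=; lra.
Qed.

End Telescoping.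

Theorem lemma7p2 (R : realType) (a : nat -> \bar R) (s : nat -> R) (c : R) :
  (forall i, 0 <= a i) ->
  (forall i, (0 <= s i)%R) ->
  (0 < c)%R ->
  (forall i, (c / 2)%:E * (yseq a i ^+ 2) * (s i)%:E <= a i.+1) ->
  (forall i, (s i)%:E <= (yseq a i)^-1) ->
  tseq s (Iinf a) <= (2 + 4 / c)%:E.
Proof.
move=> a0 s0 c0 growth step.
have bound := partial_sum_bounded _ _ _ _ a0 s0 c0 growth step.
have K0 : (0 <= 2 + 4 / c)%R by rewrite addr_ge0 // divr_ge0 // ltW.
rewrite /tseq /Iinf; case: pselect => [exI|noI].
- (* I = 0 gives t_0 = 0; I = m+1 has y_m finite by minimality. *)
  case: ex_minnP => -[_ _|m _ Imin]; first by rewrite big_geq // lee_fin.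
  rewrite lee_fin; apply: bound; apply/negP => /Imin.
  by rewrite ltnn.
-
  apply: lime_le; first by apply: is_cvg_nneseries => i _ _; rewrite lee_fin.
  apply: nearW => -[|n] /=; first by rewrite big_geq // lee_fin.
  rewrite sumEFin lee_fin; apply: bound; apply/negP => yn.
  by apply: noI; exists n.
Qed.
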